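(* In the setting below, $$B_0\ \cong\ \bigoplus_{e\in G_0}\ \bigoplus_{f\in G_0:\ T_e\cap S_f\neq\emptyset}M_{n_{e,f}}(E_e)$$ as unital $K$-algebras, where $n_{e,f}=|T_e\cap S_f|$. Here $B_0$ is a unital subalgebra of $B$ with identity $\sum_{e\in G_0}\sum_{g\in T_e}1_e\delta_e\#v_g$.
   Context: Groupoid conventions. A groupoid is a small category with all morphisms invertible, regarded as the set $G$ of morphisms. For $g\in G$ we have $d(g)=g^{-1}g$ and $r(g)=gg^{-1}$. The product $gh$ is defined iff $d(g)=r(h)$, and then $d(gh)=d(h)$, $r(gh)=r(g)$. $G^2=\{(g,h):d(g)=r(h)\}$, and $G_0$ is the set of identities. For $e\in G_0$: - $G_e=\{g: d(g)=r(g)=e\}$; - $S_e=\{g\in G: d(g)=e\}$; - $T_e=\{g\in G: r(g)=e\}$. Actions. An action of $G$ on a ring $R$ is a pair $\beta=(\{E_g\},\{\beta_g\})$ where each $E_g=E_{r(g)}$ is an ideal of $R$, each $\beta_g:E_{g^{-1}}\to E_g$ is a ring isomorphism, $\beta_e=\mathrm{id}$ for $e\in G_0$, and $\beta_g\beta_h=\beta_{gh}$ on $E_{h^{-1}}$ for $(g,h)\in G^2$. Skew groupoid ring. $R\star_\beta G=\bigoplus_{g\in G}E_g\delta_g$ (the $\delta_g$ are formal symbols), with $(x\delta_g)(y\delta_h)=x\beta_g(y)\delta_{gh}$ if $(g,h)\in G^2$ and $0$ otherwise, for $x\in E_g$, $y\in E_h$. $KG^*$. The free $K$-module with basis $\{v_g\}_{g\in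 G}$, with $v_gv_h=\delta_{g,h}v_g$ and identity $\sum_g v_g$. Weak smash product. For a unital $G$-graded algebra $A=\bigoplus A_g$ (with $A_gA_h\subseteq A_{gh}$ if $(g,h)\in G^2$, and $0$ otherwise), $KG^*$ acts by $v_h\cdot a=a_h$ (the $h$-component). $A\#KG^*=A\otimes_K KG^*$ with $(a\#v_g)(b\#v_h)=a(v_{gh^{-1}}\cdot b)\#v_h$ if $d(g)=d(h)$, and $0$ otherwise. Setting. $K$ is a commutative unital ring and $G$ is a finite groupoid. $R$ is a not necessarily unital $K$-algebra with an action $\beta$ of $G$ (by $K$-linear maps) such that each $E_e$, $e\in G_0$, has an identity element $1_e$; put $1_g:=1_{r(g)}$, the identity of $E_g$. Then $R\star_\beta G$ is a unital $K$-algebra with identity $\sum_{e\in G_0}1_e\delta_e$. It is $G$-graded with $g$-component $E_g\delta_g$, so that $v_k\cdot(a_g\delta_g)=\delta_{k,g}a_g\delta_g$. Let $B=(R\star_\beta G)\#KG^*=\bigoplus_{g,h\in G}E_g\delta_g\#v_h$ and $$B_0=\bigoplus_{g,h\in G:\ d(g)=r(g)=r(h)}E_g\delta_g\#v_h.$$ $M_n(X)$ denotes the $n\times n$ matrix algebra over $X$. *)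

From HB Require Import structures.
From mathcomp Require Import all_boot all_order all_algebra.
Set Implicit Arguments. Unset Strict Implicit. Unset Printing Implicit Defensive.
Import GRing.Theory.
Local Open Scope ring_scope.

(* Finite groupoids, given as the finite set of morphisms with a       *)
(* partial product (gmul g h is meaningful only when d g = r h).       *)
Record groupoid := Groupoid {
  gcar :> finType;
  gmul : gcar -> gcar -> gcar;
  ginv : gcar -> gcar;
  ginvK : involutive ginv;
  gmulA : forall g h k,
    gmul (ginv g) g = gmul h (ginv h) -> gmul (ginv h) h = gmul k (ginv k) ->
    gmul (gmul g h) k = gmul g (gmul h k);
  gd_mul : forall g h, gmul (ginv g) g = gmul h (ginv h) ->
    gmul (ginv (gmul g h)) (gmul g h) = gmul (ginv h) h;
  gr_mul : forall g h, gmul (ginv g) g = gmul h (ginv h) ->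
    gmul (gmul g h) (ginv (gmul g h)) = gmul g (ginv g);
  gmul_d : forall g, gmul g (gmul (ginv g) g) = g;
  gmul_r : forall g, gmul (gmul g (ginv g)) g = g
}.

Definition gd (G : groupoid) (g : G) : G := gmul (ginv g) g.
Definition gr (G : groupoid) (g : G) : G := gmul g (ginv g).

Definition G0 (G : groupoid) : {set G} := [set gd g | g : G].
Definition Sset (G : groupoid) (e : G) : {set G} := [set g | gd g == e].
Definition Tset (G : groupoid) (e : G) : {set G} := [set g | gr g == e].
Definition nEF (G : groupoid) (e f : G) : nat := #|Tset e :&: Sset f|.

Record nuAlg (K : comPzRingType) := NuAlg {
  nu_car :> lmodType K;
  nu_mul : nu_car -> nu_car -> nu_car;
  nu_mulA : associative nu_mul;
  nu_mulDl : left_distributive nu_mul +%R;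
  nu_mulDr : right_distributive nu_mul +%R;
  nu_scaleAl : forall (k : K) x y, k *: nu_mul x y = nu_mul (k *: x) y;
  nu_scaleAr : forall (k : K) x y, k *: nu_mul x y = nu_mul x (k *: y)
}.

Section Defs.
Variables (K : comPzRingType) (G : groupoid) (R : nuAlg K).
Local Notation "x ** y" := (nu_mul x y) (at level 40, left associativity).

Definition is_ideal (I : R -> Prop) : Prop :=
  [/\ I 0,
      forall x y, I x -> I y -> I (x + y),
      forall x, I x -> I (- x),
      forall x y, I x -> I (x ** y) &
      forall x y, I y -> I (x ** y)].

Record is_action (E : G -> R -> Prop) (beta : G -> R -> R) : Prop := IsAction {
  act_Er : forall g, E g = E (gr g);
  act_ideal : forall g, is_ideal (E g);
  act_mem : forall g x, E (ginv g) x -> E g (beta g x);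
  act_add : forall g x y, E (ginv g) x -> E (ginv g) y ->
    beta g (x + y) = beta g x + beta g y;
  act_mul : forall g x y, E (ginv g) x -> E (ginv g) y ->
    beta g (x ** y) = beta g x ** beta g y;
  act_scale : forall g (k : K) x, E (ginv g) x -> beta g (k *: x) = k *: beta g x;
  act_inj : forall g x y, E (ginv g) x -> E (ginv g) y -> beta g x = beta g y -> x = y;
  act_surj : forall g y, E g y -> exists2 x, E (ginv g) x & beta g x = y;
  act_id : forall e x, e \in G0 G -> E e x -> beta e x = x;
  act_comp : forall g h x, gd g = gr h -> E (ginv h) x ->
    beta g (beta h x) = beta (gmul g h) x
}.

Definition is_unit_of (I : R -> Prop) (u : R) : Prop :=
  I u /\ forall x, I x -> u ** x = x /\ x ** u = x.

Variables (E : G -> R -> Prop) (beta : G -> R -> R).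

(* ---- skew groupoid ring  R *_beta G : a = sum_g a g delta_g ---- *)
Definition skew := G -> R.
Definition skew_mul (a b : skew) : skew := fun g =>
  \sum_(g1 : G) \sum_(g2 : G | (gd g1 == gr g2) && (gmul g1 g2 == g))
     a g1 ** beta g1 (b g2).
(* v_k . a  (homogeneous component of degree k) *)
Definition skew_comp (k : G) (a : skew) : skew := fun g => if g == k then a g else 0.

(* ---- B = (R *_beta G) # KG^* : X = sum_h (X h) # v_h ---- *)
Definition Bcar := G -> skew.
Definition B_add (X Y : Bcar) : Bcar := fun h g => X h g + Y h g.
Definition B_scale (k : K) (X : Bcar) : Bcar := fun h g => k *: X h g.
(* (a # v_g)(b # v_h) = a (v_{g h^-1} . b) # v_h if d g = d h, 0 otherwise *)
Definition B_mul (X Y : Bcar) : Bcar := fun h k =>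
  \sum_(g : G | gd g == gd h) skew_mul (X g) (skew_comp (gmul g (ginv h)) (Y h)) k.
Definition in_B (X : Bcar) : Prop := forall h g, E g (X h g).
Definition in_B0 (X : Bcar) : Prop :=
  in_B X /\ forall h g, ~~ ((gd g == gr g) && (gr g == gr h)) -> X h g = 0.

Variable one : G -> R.
Definition B0_one : Bcar := fun h g => if g == gr h then one (gr h) else 0.

(* ---- target: (+)_{e in G_0} (+)_{f in G_0, T_e cap S_f <> 0} M_{n_{e,f}}(E_e) ---- *)
Definition tgt_idx (e f : G) : bool :=
  [&& e \in G0 G, f \in G0 G & Tset e :&: Sset f != set0].
Definition Tcar := forall e f : G, 'M[R]_(nEF e f).
Definition in_T (x : Tcar) : Prop :=
  forall e f, (forall i j, E e (x e f i j)) /\ (~~ tgt_idx e f -> x e f = 0).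
Definition T_add (x y : Tcar) : Tcar := fun e f => x e f + y e f.
Definition T_scale (k : K) (x : Tcar) : Tcar := fun e f => map_mx (fun r => k *: r) (x e f).
Definition T_mul (x y : Tcar) : Tcar := fun e f =>
  \matrix_(i, j) \sum_(l < nEF e f) x e f i l ** y e f l j.
Definition T_one : Tcar := fun e f =>
  \matrix_(i, j) (if tgt_idx e f && (i == j) then one e else 0).

End Defs.

(* B_0 is spanned by the E_g delta_g # v_h with d g = r g = r h.  Setting e = r h
   and f = d h, both h and g h are arrows from f to e; enumerating the arrows
   g_1, ..., g_n of T_e cap S_f, the pair (g, h) corresponds to the matrix entry
   (a, b) with h = g_b and g = g_a g_b^-1.  Fixing a pivot arrow p in T_e cap S_f,
   the coefficient at (g_a g_b^-1, g_b) is sent to entry (a, b) after applying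
   beta along the twist p g_a^-1 in the isotropy group G_e; the twists absorb the
   action appearing in the product of B, so that multiplication becomes matrix
   multiplication. *)

From HB Require Import structures.
From mathcomp Require Import all_boot all_order all_algebra.
From Stdlib Require Import FunctionalExtensionality.
Set Implicit Arguments. Unset Strict Implicit. Unset Printing Implicit Defensive.
Import GRing.Theory.
Local Open Scope ring_scope.

Section GroupoidCalculus.
Variable G : groupoid.
Implicit Types a b c e g : G.

(* "Division" a b^-1, meaningful when d a = d b; it is an arrow from r b to r a. *)
Definition gdiv a b : G := gmul a (ginv b).

Lemma gd_inv g : gd (ginv g) = gr g.
Proof. by rewrite /gd /gr ginvK. Qed.

Lemma gr_inv g : gr (ginv g) = gd g.
Proof. by rewrite /gd /gr ginvK. Qed.

Lemma gmulAc a b c : gd a = gr b -> gd b = gr c ->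
  gmul (gmul a b) c = gmul a (gmul b c).
Proof. exact: gmulA. Qed.

Lemma gd_gmul a b : gd a = gr b -> gd (gmul a b) = gd b.
Proof. exact: gd_mul. Qed.

Lemma gr_gmul a b : gd a = gr b -> gr (gmul a b) = gr a.
Proof. exact: gr_mul. Qed.

Lemma gmul_gd g : gmul g (gd g) = g.
Proof. exact: gmul_d. Qed.

Lemma gmul_gr g : gmul (gr g) g = g.
Proof. exact: gmul_r. Qed.

Lemma gd_gd g : gd (gd g) = gd g.
Proof. exact: gd_gmul (gd_inv g). Qed.

Lemma gr_gd g : gr (gd g) = gd g.
Proof. by rewrite /gd gr_gmul ?gd_inv // -/(gr (ginv g)) gr_inv. Qed.

Lemma gd_gr g : gd (gr g) = gr g.
Proof. by rewrite -[gr g]gd_inv gd_gd. Qed.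

Lemma gr_gr g : gr (gr g) = gr g.
Proof. by rewrite -[gr g]gd_inv gr_gd. Qed.

Lemma G0P e : (e \in G0 G) = (gd e == e).
Proof. by apply/imsetP/eqP => [[g _ ->]|<-]; [exact: gd_gd | exists e]. Qed.

Lemma G0_gd g : gd g \in G0 G.
Proof. by rewrite G0P gd_gd. Qed.

Lemma G0_gr g : gr g \in G0 G.
Proof. by rewrite G0P gd_gr. Qed.

Lemma gmulK a b : gd a = gr b -> gdiv (gmul a b) b = a.
Proof.
by move=> dab; rewrite /gdiv gmulAc ?gr_inv // -/(gr b) -dab gmul_gd.
Qed.

Lemma gmulIr a b c : gd a = gr c -> gd b = gr c -> gmul a c = gmul b c -> a = b.
Proof. by move=> dac dbc abc; rewrite -(gmulK dac) -(gmulK dbc) abc. Qed.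

Lemma gd_gdiv a b : gd a = gd b -> gd (gdiv a b) = gr b.
Proof. by move=> dab; rewrite gd_gmul ?gd_inv // gr_inv. Qed.

Lemma gr_gdiv a b : gd a = gd b -> gr (gdiv a b) = gr a.
Proof. by move=> dab; rewrite gr_gmul // gr_inv. Qed.

Lemma gdivK a b : gd a = gd b -> gmul (gdiv a b) b = a.
Proof.
by move=> dab; rewrite gmulAc ?gr_inv ?gd_inv // -/(gd b) -dab gmul_gd.
Qed.

Lemma gdiv_trans a b c : gd a = gd b -> gd b = gd c ->
  gmul (gdiv a b) (gdiv b c) = gdiv a c.
Proof.
move=> dab dbc.
have -> : gdiv a c = gmul (gmul (gdiv a b) b) (ginv c) by rewrite gdivK.
by rewrite gmulAc ?gd_gdiv ?gr_inv.
Qed.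

Lemma gdiv_eq_gr a b : gd a = gd b -> (gdiv a b == gr b) = (a == b).
Proof.
move=> dab; apply/eqP/eqP => [abr|->]; last by [].
by rewrite -(gdivK dab) abr gmul_gr.
Qed.

Lemma gdiv_factor p g q x : gd p = gd g -> gd g = gd q ->
  ((gd x == gr (gdiv g q)) && (gmul x (gdiv g q) == gdiv p q)) = (x == gdiv p g).
Proof.
move=> dpg dgq; rewrite gr_gdiv //.
apply/andP/eqP => [[/eqP dx /eqP xgq]|->]; last by rewrite gd_gdiv // gdiv_trans.
by apply: (gmulIr (c := gdiv g q)); rewrite ?gd_gdiv ?gr_gdiv ?gdiv_trans.
Qed.

Lemma in_TS e f x : (x \in Tset e :&: Sset f) = (gr x == e) && (gd x == f).
Proof. by rewrite !inE. Qed.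
End GroupoidCalculus.

Lemma sum_if_eq (V : nmodType) (T : finType) (P : pred T) (c : T) (F : T -> V) :
  \sum_(x | P x) (if x == c then F x else 0) = if P c then F c else 0.
Proof.
rewrite -big_mkcondr; case: ifP => Pc.
  by rewrite (big_pred1 c) // => x /=; case: eqP => [->|_]; rewrite ?Pc ?andbF.
by rewrite big_pred0 // => x /=; case: eqP => [->|_]; rewrite ?Pc ?andbF.
Qed.

Section NonUnitalAlgebra.
Variables (K : comPzRingType) (R : nuAlg K).
Local Notation "x ** y" := (nu_mul x y) (at level 40, left associativity).

Lemma nu_mul0r (x : R) : 0 ** x = 0.
Proof. by apply: (addrI (0 ** x)); rewrite -nu_mulDl !addr0. Qed.

Lemma nu_mulr0 (x : R) : x ** 0 = 0.
Proof. by apply: (addrI (x ** 0)); rewrite -nu_mulDr !addr0. Qed.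
End NonUnitalAlgebra.

Section Action.
Variables (K : comPzRingType) (G : groupoid) (R : nuAlg K).
Variables (E : G -> R -> Prop) (beta : G -> R -> R).
Hypothesis act : is_action E beta.
Local Notation "x ** y" := (nu_mul x y) (at level 40, left associativity).

Lemma memE0 g : E g 0.
Proof. by case: (act_ideal act g). Qed.

Lemma memED g x y : E g x -> E g y -> E g (x + y).
Proof. by case: (act_ideal act g) => _ memD _ _ _; apply: memD. Qed.

Lemma memEMl g x y : E g x -> E g (x ** y).
Proof. by case: (act_ideal act g) => _ _ _ memMl _; apply: memMl. Qed.

Lemma memE_sum g (I : Type) (s : seq I) (P : pred I) (F : I -> R) :
  (forall i, P i -> E g (F i)) -> E g (\sum_(i <- s | P i) F i).
Proof. by move=> memF; apply: big_ind => //; [exact: memE0 | exact: memED]. Qed.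

Lemma E_gr g : E g = E (gr g).
Proof. exact: (act_Er act). Qed.

Lemma E_inv g : E (ginv g) = E (gd g).
Proof. by rewrite E_gr gr_inv. Qed.

Lemma beta0 g : beta g 0 = 0.
Proof.
by apply: (addrI (beta g 0)); rewrite addr0 -(act_add act) ?addr0 //; apply: memE0.
Qed.

Lemma beta_sum g (I : Type) (s : seq I) (P : pred I) (F : I -> R) :
  (forall i, P i -> E (ginv g) (F i)) ->
  beta g (\sum_(i <- s | P i) F i) = \sum_(i <- s | P i) beta g (F i).
Proof.
move=> memF; elim: s => [|x s IHs]; first by rewrite !big_nil beta0.
rewrite !big_cons; case: ifP => Px //.
by rewrite (act_add act) ?IHs //; [exact: memF | exact: memE_sum].
Qed.

Lemma betaK g y : E (gr g) y -> beta g (beta (ginv g) y) = y.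
Proof.
move=> Ey; rewrite (act_comp act) ?gr_inv // ?ginvK; last by rewrite E_gr.
by rewrite (act_id act) // G0_gr.
Qed.

Lemma betaVK g y : E (gd g) y -> beta (ginv g) (beta g y) = y.
Proof. by have := @betaK (ginv g) y; rewrite ginvK gr_inv. Qed.

Lemma beta_unit (one : R) g :
  gd g = gr g -> is_unit_of (E (gr g)) one -> beta g one = one.
Proof.
move=> dg [Eone oneP].
have Eone_inv : E (ginv g) one by rewrite E_inv dg.
have [z Ez betaz] : exists2 z, E (ginv g) z & beta g z = one.
  by apply: (act_surj act); rewrite E_gr.
have Ebeta : E (gr g) (beta g one) by rewrite -E_gr; apply: (act_mem act).
have beta_one_l : beta g one ** one = one.
  by rewrite -{2 3}betaz -(act_mul act) // (proj1 (oneP _ _)) // -dg -E_inv.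
by rewrite -{2}beta_one_l (proj2 (oneP _ Ebeta)).
Qed.
End Action.

Section BlockIndices.
Variables (G : groupoid) (e f : G).
Implicit Types a b c : 'I_(nEF e f).

(* The arrows from f to e, enumerated by the row/column indices of the block
   M_{n_{e,f}}, a fixed pivot among them, and the twist p g_a^-1 in G_e that
   rectifies the multiplication. *)
Definition arr a : G := enum_val a.
Definition pivot : G := odflt e [pick x in Tset e :&: Sset f].
Definition twist a : G := gdiv pivot (arr a).

Lemma arrP a : gr (arr a) = e /\ gd (arr a) = f.
Proof. by have := enum_valP a; rewrite in_TS => /andP[/eqP -> /eqP ->]. Qed.

Lemma arr_eq a b : (arr a == arr b) = (a == b).
Proof. by apply/eqP/eqP => [/enum_val_inj|->]. Qed.

Lemma pivotP a : gr pivot = e /\ gd pivot = f.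
Proof.
rewrite /pivot; case: pickP => [x|/(_ (arr a))]; last by rewrite enum_valP.
by rewrite in_TS => /andP[/eqP -> /eqP ->].
Qed.

Lemma block_G0 a : e \in G0 G.
Proof. by case: (arrP a) => <- _; apply: G0_gr. Qed.

Lemma block_tgt a : tgt_idx e f.
Proof.
have Gf : f \in G0 G by case: (arrP a) => _ <-; apply: G0_gd.
rewrite /tgt_idx (block_G0 a) Gf /=.
by apply/set0Pn; exists (arr a); apply: enum_valP.
Qed.

Lemma gr_arr_div a b : gr (gdiv (arr a) (arr b)) = e.
Proof. by case: (arrP a) (arrP b) => ra da [_ db]; rewrite gr_gdiv ?da. Qed.

Lemma gd_arr_div a b : gd (gdiv (arr a) (arr b)) = e.
Proof. by case: (arrP a) (arrP b) => _ da [rb db]; rewrite gd_gdiv ?da. Qed.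

Lemma gr_twist a : gr (twist a) = e.
Proof. by case: (arrP a) (pivotP a) => _ da [rp dp]; rewrite gr_gdiv ?dp. Qed.

Lemma gd_twist a : gd (twist a) = e.
Proof. by case: (arrP a) (pivotP a) => ra da [_ dp]; rewrite gd_gdiv ?dp. Qed.

Lemma twist_arr_div a c : gmul (twist a) (gdiv (arr a) (arr c)) = twist c.
Proof.
case: (arrP a) (arrP c) (pivotP a) => _ da [_ dc] [_ dp].
by rewrite gdiv_trans ?dp ?da.
Qed.
End BlockIndices.

Section BlockDecomposition.
Variables (K : comPzRingType) (G : groupoid) (R : nuAlg K).
Variables (E : G -> R -> Prop) (beta : G -> R -> R) (one : G -> R).
Hypothesis act : is_action E beta.
Hypothesis unit_one : forall e, e \in G0 G -> is_unit_of (E e) (one e).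
Local Notation "x ** y" := (nu_mul x y) (at level 40, left associativity).

Lemma Bcar_ext (X Y : Bcar G R) : (forall h g, X h g = Y h g) -> X = Y.
Proof. by move=> XY; do 2!apply: functional_extensionality => ?; apply: XY. Qed.

Lemma Tcar_ext (x y : Tcar G R) : (forall e f a b, x e f a b = y e f a b) -> x = y.
Proof.
move=> xy; do 2!apply: functional_extensionality_dep => ?.
by apply/matrixP => a b; apply: xy.
Qed.

Lemma B0_mem X h g : in_B0 E X -> E g (X h g).
Proof. by case=> memX _; apply: memX. Qed.

Lemma B0_supp X h g : in_B0 E X ->
  ~~ ((gd g == gr g) && (gr g == gr h)) -> X h g = 0.
Proof. by case=> _ suppX; apply: suppX. Qed.

Section Block.
Variables (e f : G) (a b : 'I_(nEF e f)).

Lemma E_twist : E (twist a) = E e.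
Proof. by rewrite (E_gr act) gr_twist. Qed.

Lemma E_twist_inv : E (ginv (twist a)) = E e.
Proof. by rewrite (E_inv act) gd_twist. Qed.

Lemma E_arr_div : E (gdiv (arr a) (arr b)) = E e.
Proof. by rewrite (E_gr act) gr_arr_div. Qed.

Lemma E_arr_div_inv : E (ginv (gdiv (arr a) (arr b))) = E e.
Proof. by rewrite (E_inv act) gd_arr_div. Qed.

Lemma B0_mem_block X : in_B0 E X -> E e (X (arr b) (gdiv (arr a) (arr b))).
Proof. by move/(B0_mem (arr b) (gdiv (arr a) (arr b))); rewrite E_arr_div. Qed.
End Block.

Definition to_blocks (X : Bcar G R) : Tcar G R := fun e f =>
  \matrix_(a, b) beta (twist a) (X (arr b) (gdiv (arr a) (arr b))).

Definition block_entry (x : Tcar G R) (e f h g : G) : R :=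
  if [pick a : 'I_(nEF e f) | arr a == gmul g h] is Some a then
    if [pick b : 'I_(nEF e f) | arr b == h] is Some b then
      beta (ginv (twist a)) (x e f a b)
    else 0
  else 0.

Definition of_blocks (x : Tcar G R) : Bcar G R := fun h g =>
  if (gd g == gr g) && (gr g == gr h) then block_entry x (gr h) (gd h) h g else 0.

Lemma block_entry_arr x e f (a b : 'I_(nEF e f)) h g :
  arr b = h -> gdiv (arr a) (arr b) = g ->
  block_entry x e f h g = beta (ginv (twist a)) (x e f a b).
Proof.
case: (arrP a) (arrP b) => _ da [_ db] <- <-.
rewrite /block_entry gdivK ?da ?db //.
case: pickP => [a' /eqP/enum_val_inj -> | /(_ a)]; last by rewrite eqxx.
by case: pickP => [b' /eqP/enum_val_inj -> | /(_ b)]; rewrite ?eqxx.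
Qed.

Lemma B0_arr_param (h g : G) : gd g = gr g -> gr g = gr h ->
  exists a b : 'I_(nEF (gr h) (gd h)), arr b = h /\ gdiv (arr a) (arr b) = g.
Proof.
move=> dg rg; have dgh : gd g = gr h by rewrite dg.
have hTS : h \in Tset (gr h) :&: Sset (gd h) by rewrite in_TS !eqxx.
have ghTS : gmul g h \in Tset (gr h) :&: Sset (gd h).
  by rewrite in_TS gr_gmul // gd_gmul // rg !eqxx.
exists (enum_rank_in ghTS (gmul g h)), (enum_rank_in hTS h).
by rewrite /arr !enum_rankK_in // gmulK.
Qed.

Lemma of_blocksK X : in_B0 E X -> of_blocks (to_blocks X) = X.
Proof.
move=> X0; apply: Bcar_ext => h g; rewrite /of_blocks.
case: ifP => [/andP[/eqP dg /eqP rg] | suppg]; last by rewrite (B0_supp X0) ?suppg.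
have [a [b [bh abg]]] := B0_arr_param dg rg.
rewrite (block_entry_arr _ bh abg) mxE abg bh (betaVK act) // gd_twist.
by have := B0_mem h g X0; rewrite (E_gr act) rg.
Qed.

Lemma to_blocksK x : in_T E x -> to_blocks (of_blocks x) = x.
Proof.
move=> xT; apply: Tcar_ext => e f a b; rewrite mxE /of_blocks.
case: (arrP b) => rb db; rewrite gd_arr_div gr_arr_div rb eqxx /= db.
rewrite (block_entry_arr _ (a := a) (b := b)) // (betaK act) // gr_twist.
by case: (xT e f) => memx _; apply: memx.
Qed.

Lemma to_blocks_inj X Y : in_B0 E X -> in_B0 E Y -> to_blocks X = to_blocks Y -> X = Y.
Proof. by move=> X0 Y0 XY; rewrite -(of_blocksK X0) XY of_blocksK. Qed.

Lemma to_blocks_T X : in_B0 E X -> in_T E (to_blocks X).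
Proof.
move=> X0 e f; split=> [a b | not_tgt].
  rewrite mxE -(E_twist a); apply: (act_mem act).
  by rewrite E_twist_inv; apply: B0_mem_block.
by apply/matrixP => a; rewrite (block_tgt a) in not_tgt.
Qed.

Lemma of_blocks_B0 x : in_T E x -> in_B0 E (of_blocks x).
Proof.
move=> xT; split=> h g; rewrite /of_blocks; last by move/negbTE ->.
case: ifP => [/andP[/eqP dg /eqP rg] | _]; last exact: (memE0 act).
have [a [b [bh abg]]] := B0_arr_param dg rg.
rewrite (block_entry_arr _ bh abg) -abg (E_gr act) gr_arr_div -(E_twist_inv a).
apply: (act_mem act); rewrite ginvK E_twist.
by case: (xT (gr h) (gd h)) => memx _; apply: memx.
Qed.

Lemma to_blocks_add X Y : in_B0 E X -> in_B0 E Y ->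
  to_blocks (B_add X Y) = T_add (to_blocks X) (to_blocks Y).
Proof.
move=> X0 Y0; apply: Tcar_ext => e f a b; rewrite !mxE (act_add act) //;
  by rewrite E_twist_inv; apply: B0_mem_block.
Qed.

Lemma to_blocks_scale k X : in_B0 E X -> to_blocks (B_scale k X) = T_scale k (to_blocks X).
Proof.
move=> X0; apply: Tcar_ext => e f a b; rewrite !mxE (act_scale act) //.
by rewrite E_twist_inv; apply: B0_mem_block.
Qed.

Lemma B_mul_gdiv X Y p q : gd p = gd q ->
  B_mul beta X Y q (gdiv p q) =
  \sum_(g | gd g == gd q) X g (gdiv p g) ** beta (gdiv p g) (Y q (gdiv g q)).
Proof.
move=> dpq; apply: eq_bigr => g /eqP dgq; rewrite /skew_mul /skew_comp.
rewrite (eq_bigr (fun g1 =>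
    if g1 == gdiv p g then X g g1 ** beta g1 (Y q (gdiv g q)) else 0)).
  by rewrite (sum_if_eq xpredT).
move=> g1 _; rewrite (eq_bigr (fun g2 =>
    if g2 == gdiv g q then X g g1 ** beta g1 (Y q g2) else 0)).
  by rewrite sum_if_eq gdiv_factor // dgq.
by move=> g2 _; case: eqP => // _; rewrite (beta0 act) nu_mulr0.
Qed.

Lemma B_mul_gdiv_B0 X Y p q : in_B0 E Y -> gd p = gd q ->
  B_mul beta X Y q (gdiv p q) =
  \sum_(g in Tset (gr q) :&: Sset (gd q))
     X g (gdiv p g) ** beta (gdiv p g) (Y q (gdiv g q)).
Proof.
move=> Y0 dpq; rewrite B_mul_gdiv // big_mkcond [RHS]big_mkcond.
apply: eq_bigr => g _; rewrite in_TS andbC; case: eqP => //= dgq.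
case: eqP => // rgq; rewrite (B0_supp Y0) ?(beta0 act) ?nu_mulr0 //.
by rewrite gr_gdiv //; apply/nandP; right; apply/eqP.
Qed.

(* Multiplicativity: by [B_mul_gdiv_B0] the (a, b) entry of X Y is a sum over
   the arrows g_c, and the twist of a turns beta_{g_a g_c^-1} into the twist of c. *)
Lemma to_blocks_mul X Y : in_B0 E X -> in_B0 E Y ->
  to_blocks (B_mul beta X Y) = T_mul (to_blocks X) (to_blocks Y).
Proof.
move=> X0 Y0; apply: Tcar_ext => e f a b; rewrite !mxE.
case: (arrP a) (arrP b) => _ da [rb db].
rewrite (B_mul_gdiv_B0 _ Y0); last by rewrite da db.
rewrite rb db big_enum_val (beta_sum act); last first.
  by move=> c _; rewrite E_twist_inv; apply: (memEMl act); apply: (B0_mem_block a c X0).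
apply: eq_bigr => c _; rewrite -/(arr c) !mxE.
have Yc := B0_mem_block c b Y0.
rewrite (act_mul act) ?E_twist_inv; last 2 first.
- exact: (B0_mem_block a c X0).
- by rewrite -(E_arr_div a c); apply: (act_mem act); rewrite E_arr_div_inv.
by rewrite (act_comp act) ?twist_arr_div ?gd_twist ?gr_arr_div ?E_arr_div_inv.
Qed.

(* B_0 is closed under multiplication: the product of delta_{g1} # v_g and
   delta_{g2} # v_h with g2 = g h^-1 is supported at delta_{g1 g2} # v_h. *)
Lemma B_mul_B0 X Y : in_B0 E X -> in_B0 E Y -> in_B0 E (B_mul beta X Y).
Proof.
move=> X0 Y0; split=> h k.
  apply: (memE_sum act) => g _; apply: (memE_sum act) => g1 _.
  apply: (memE_sum act) => g2 /andP[/eqP dg1 /eqP g1g2].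
  rewrite (E_gr act) -g1g2 gr_gmul // -(E_gr act); apply: (memEMl act); exact: B0_mem.
move=> k_out; apply: big1 => g /eqP dg; apply: big1 => g1 _.
apply: big1 => g2 /andP[/eqP dg1 /eqP g1g2]; rewrite /skew_comp.
case: eqP => [g2E | _]; last by rewrite (beta0 act) nu_mulr0.
case Y2: ((gd g2 == gr g2) && (gr g2 == gr h)); last first.
  by rewrite (B0_supp Y0) ?Y2 ?(beta0 act) ?nu_mulr0.
case X1: ((gd g1 == gr g1) && (gr g1 == gr g)); last first.
  by rewrite (B0_supp X0) ?X1 ?nu_mul0r.
case/andP: Y2 X1 => /eqP dg2 /eqP rg2 /andP[_ /eqP rg1].
have rg2g : gr g2 = gr g by rewrite g2E gr_gmul // gr_inv.
by move: k_out; rewrite -g1g2 gd_gmul // gr_gmul // dg2 rg1 -rg2g rg2 !eqxx.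
Qed.

Lemma B0_one_in : in_B0 E (B0_one one).
Proof.
split=> h g; rewrite /B0_one.
  by case: eqP => [-> | _]; [case: (unit_one (G0_gr h)) | exact: (memE0 act)].
by move=> suppg; case: eqP => // gh; rewrite gh gd_gr gr_gr !eqxx in suppg.
Qed.

Lemma to_blocks_one : to_blocks (B0_one one) = T_one one.
Proof.
apply: Tcar_ext => e f a b; rewrite !mxE /B0_one (block_tgt a) /=.
case: (arrP a) (arrP b) => ra da [_ db].
rewrite gdiv_eq_gr ?da ?db // arr_eq; case: eqP => [<- | _]; last exact: (beta0 act).
rewrite ra (beta_unit act) ?gd_twist ?gr_twist //; exact: unit_one (block_G0 a).
Qed.

Lemma T_mul1 x : in_T E x -> T_mul (T_one one) x = x.
Proof.
move=> xT; apply: Tcar_ext => e f a b; rewrite mxE.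
rewrite (eq_bigr (fun c => if c == a then x e f c b else 0)); last first.
  move=> c _; rewrite mxE (block_tgt a) /= eq_sym; case: eqP => [-> | _].
    by case: (unit_one (block_G0 a)) => _ /(_ _ (proj1 (xT e f) a b)) [].
  exact: nu_mul0r.
by rewrite (sum_if_eq xpredT).
Qed.

Lemma T_mulr1 x : in_T E x -> T_mul x (T_one one) = x.
Proof.
move=> xT; apply: Tcar_ext => e f a b; rewrite mxE.
rewrite (eq_bigr (fun c => if c == b then x e f a c else 0)); last first.
  move=> c _; rewrite mxE (block_tgt a) /=; case: eqP => [-> | _].
    by case: (unit_one (block_G0 a)) => _ /(_ _ (proj1 (xT e f) a b)) [].
  exact: nu_mulr0.
by rewrite (sum_if_eq xpredT).
Qed.

(* B0_one is the identity of B_0, transported from the block side. *)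
Lemma B0_mul1 X : in_B0 E X -> B_mul beta (B0_one one) X = X.
Proof.
move=> X0; apply: to_blocks_inj => //; first exact: B_mul_B0 B0_one_in X0.
by rewrite (to_blocks_mul B0_one_in X0) to_blocks_one T_mul1 //; apply: to_blocks_T.
Qed.

Lemma B0_mulr1 X : in_B0 E X -> B_mul beta X (B0_one one) = X.
Proof.
move=> X0; apply: to_blocks_inj => //; first exact: B_mul_B0 X0 B0_one_in.
by rewrite (to_blocks_mul X0 B0_one_in) to_blocks_one T_mulr1 //; apply: to_blocks_T.
Qed.
End BlockDecomposition.

Theorem theorem3p7 (K : comPzRingType) (G : groupoid) (R : nuAlg K)
    (E : G -> R -> Prop) (beta : G -> R -> R) (one : G -> R) :
  is_action E beta ->
  (forall e, e \in G0 G -> is_unit_of (E e) (one e)) ->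
  [/\ in_B0 E (B0_one one),
      (forall X Y, in_B0 E X -> in_B0 E Y -> in_B0 E (B_mul beta X Y)),
      (forall X, in_B0 E X ->
         B_mul beta (B0_one one) X = X /\ B_mul beta X (B0_one one) = X) &
   exists phi : Bcar G R -> Tcar G R,
     (forall X, in_B0 E X -> in_T E (phi X)) /\
     (forall X Y, in_B0 E X -> in_B0 E Y -> phi X = phi Y -> X = Y) /\
     (forall x, in_T E x -> exists2 X, in_B0 E X & phi X = x) /\
     (forall X Y, in_B0 E X -> in_B0 E Y -> phi (B_add X Y) = T_add (phi X) (phi Y)) /\
     (forall (k : K) X, in_B0 E X -> phi (B_scale k X) = T_scale k (phi X)) /\
     (forall X Y, in_B0 E X -> in_B0 E Y ->
         phi (B_mul beta X Y) = T_mul (phi X) (phi Y)) /\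
     phi (B0_one one) = T_one one].
Proof.
move=> act unit_one; split.
- exact: B0_one_in act unit_one.
- exact: B_mul_B0 act.
- by move=> X X0; split; [exact: (B0_mul1 act unit_one X0) | exact: (B0_mulr1 act unit_one X0)].
exists (to_blocks beta); split; first exact: to_blocks_T act.
split; first exact: to_blocks_inj act.
split; first by move=> x xT; exists (of_blocks beta x);
  [exact: (of_blocks_B0 act xT) | exact: (to_blocksK act xT)].
split; first exact: to_blocks_add act.
split; first exact: to_blocks_scale act.
split; first exact: to_blocks_mul act.
exact: to_blocks_one act unit_one.
Qed.
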